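(* Let $\Gamma$ be a finite cyclic group of order $f$ with generator $\sigma$. The $\mathbb Z[\Gamma]$-submodules $M$ of $\mathbb Z[\Gamma]$ such that $\mathbb Z[\Gamma]/M$ is torsion-free over $\mathbb Z$ are exactly the modules $\overline M_{\underline d}$, for $\underline d$ ranging over the sets of positive divisors of $f$.
   Context: For $d\mid f$, $M_d=\bigoplus_{0\le l\le\varphi(d)-1}\mathbb Z\,P_{f,d}(\sigma)\sigma^l\subset\mathbb Z[\Gamma]$, where $P_{f,d}(X)=(X^f-1)/\Phi_d(X)$, $\Phi_d$ is the $d$-th cyclotomic polynomial and $\varphi$ Euler's totient function. For a set $\underline d$ of divisors of $f$, $M_{\underline d}=\bigoplus_{d\in\underline d}M_d$ and $\overline M_{\underline d}=\{\chi\in\mathbb Z[\Gamma]:a\chi\in M_{\underline d}\text{ for some }a\in\mathbb Z\smallsetminus\{0\}\}$. *)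

From mathcomp Require Import all_boot all_order all_algebra all_fingroup all_solvable all_field.
Set Implicit Arguments. Unset Strict Implicit. Unset Printing Implicit Defensive.
Import GRing.Theory.
Local Open Scope ring_scope.

(* Elements are integer-valued functions on gT supported
   on <[sigma]> (i.e. formal Z-combinations of elements of Gamma). *)
Section GroupRing.
Variables (gT : finGroupType) (sigma : gT).

Definition ZG : pred {ffun gT -> int} :=
  [pred x : {ffun gT -> int} | [forall g : gT, (g \notin <[sigma]>%g) ==> (x g == 0 :> int)]].

Definition gmul (x y : {ffun gT -> int}) : {ffun gT -> int} :=
  [ffun g => \sum_(h in <[sigma]>%g) x h * y (h^-1 * g)%g].

Definition peval (p : {poly int}) : {ffun gT -> int} :=
  [ffun g => \sum_(i < size p) p`_i * ((sigma ^+ i)%g == g)%:Z].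

Definition f := #[sigma]%g.

Definition Pfd (d : nat) : {poly int} := ('X^f - 1) %/ 'Phi_d.

Definition Md (d : nat) (x : {ffun gT -> int}) : Prop :=
  exists c : 'I_(totient d) -> int,
    x = \sum_(l < totient d) peval (Pfd d * 'X^l) *~ c l.

(* M_D = (+)_{d in D} M_d, for a set D of divisors (given as a duplicate-free list) *)
Definition MD (D : seq nat) (x : {ffun gT -> int}) : Prop :=
  exists c : nat -> nat -> int,
    x = \sum_(d <- D) \sum_(l < totient d) peval (Pfd d * 'X^l) *~ c d l.

Definition MbarD (D : seq nat) (x : {ffun gT -> int}) : Prop :=
  x \in ZG /\ exists a : int, a != 0 /\ MD D (x *~ a).

Definition is_submodule (M : {ffun gT -> int} -> Prop) : Prop :=
  [/\ forall x, M x -> x \in ZG,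
      M 0,
      forall x y, M x -> M y -> M (x + y),
      forall x, M x -> M (- x) &
      forall r x, r \in ZG -> M x -> M (gmul r x)].

Definition torsion_free_quot (M : {ffun gT -> int} -> Prop) : Prop :=
  forall (a : int) x, a != 0 -> x \in ZG -> M (x *~ a) -> M x.

End GroupRing.

(* Evaluation at [sigma] identifies [Z[Gamma]] with [Z[X]/(X^f - 1)], and over [Q]
   the factorization of [X^f - 1] into the pairwise coprime irreducible [Phi_d],
   [d %| f], splits [Q[Gamma]] into the fields [Q[X]/(Phi_d)].  A saturated
   submodule [M] is therefore determined by the set [D] of components on which it
   is nonzero: [M] is the set of [x] divisible by [Phi_e] for all [e] outside [D].
   Since [P_{f,d}(sigma)] generates the [d]-component, [D] is the set of [d] with
   [P_{f,d}(sigma)] in [M], and by the Chinese remainder theorem the saturation of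
   [M_D] is the same set of [x]. *)

From HB Require Import structures.
From mathcomp Require Import all_boot all_order all_algebra all_fingroup all_solvable all_field.
From mathcomp Require Import ring.
From Stdlib Require Import ClassicalEpsilon.
Set Implicit Arguments. Unset Strict Implicit. Unset Printing Implicit Defensive.
Import GRing.Theory Num.Theory.
Local Open Scope ring_scope.

Local Notation pQ := (map_poly (intr : int -> rat)).

Lemma size_pQ (p : {poly int}) : size (pQ p) = size p.
Proof. exact: (size_map_inj_poly intr_inj (rmorph0 _)). Qed.

Lemma dvdp_sum (R : idomainType) (I : Type) (r : seq I) (P : pred I)
    (F : I -> {poly R}) (d : {poly R}) :
  (forall i, P i -> d %| F i) -> d %| \sum_(i <- r | P i) F i.
Proof. by move=> dF; apply: (big_ind (fun q => d %| q)) => //; apply: dvdp_add. Qed.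

Lemma polyE_size_le (R : nzRingType) (p : {poly R}) k : (size p <= k)%N ->
  p = \sum_(l < k) p`_l *: 'X^l.
Proof.
move=> le_p_k; rewrite -poly_def; apply/polyP => i; rewrite coef_poly.
by case: ltnP => // le_k_i; rewrite nth_default // (leq_trans le_p_k).
Qed.

Definition classic_bool (P : Prop) : bool :=
  if excluded_middle_informative P then true else false.

Lemma classic_boolP (P : Prop) : reflect P (classic_bool P).
Proof. by rewrite /classic_bool; case: excluded_middle_informative => HP; constructor. Qed.

Lemma pos_dvdn_divisors n d : (0 < n)%N ->
  ((0 < d) && (d %| n))%N = (d \in divisors n).
Proof.
move=> n_gt0; rewrite -dvdn_divisors //.
by case dvd_dn: (d %| n)%N; rewrite ?andbF ?andbT ?(dvdn_gt0 n_gt0 dvd_dn).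
Qed.

Lemma rat_polys_scale (I : eqType) (r : I -> {poly rat}) (D : seq I) :
  exists2 a : int, a != 0 &
    exists t : I -> {poly int}, forall d, d \in D -> pQ (t d) = a%:~R *: r d.
Proof.
elim: D => [|d D [a a0 [t Et]]]; first by exists 1 => //; exists (fun=> 0).
have [q [b b0 Eq]] := rat_poly_scale (r d).
exists (a * b); first by rewrite mulf_neq0.
exists (fun e => if e == d then a *: q else b *: t e) => e; rewrite inE.
case: eqP => [-> _ | _ /= De]; rewrite map_polyZ /=.
  by rewrite Eq scalerA intrM -mulrA mulfV ?intr_eq0 // mulr1.
by rewrite Et // scalerA intrM mulrC.
Qed.

(* A common complex root of [Phi_d] and [w] is a primitive [d]-th root of unity,
   whose minimal polynomial over [Q] is [Phi_d]. *)
Lemma coprimep_Phi d (w : {poly rat}) : (0 < d)%N -> ~~ (pQ 'Phi_d %| w) ->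
  coprimep (pQ 'Phi_d) w.
Proof.
move=> d_gt0 Phi_ndvd_w; apply: contraNT Phi_ndvd_w => ncop.
have toC (p : {poly int}) : map_poly ratr (pQ p) = map_poly (intr : int -> algC) p.
  by rewrite -map_poly_comp; apply: eq_map_poly => b /=; rewrite ratr_int.
have : size (map_poly (ratr : rat -> algC) (gcdp (pQ 'Phi_d) w)) != 1.
  by rewrite size_map_poly.
case/closed_rootP => z root_gcd_z.
have root_Phi : root (map_poly ratr (pQ 'Phi_d)) z.
  by apply: root_dvdp root_gcd_z; rewrite dvdp_map dvdp_gcdl.
have root_w : root (map_poly ratr w) z.
  by apply: root_dvdp root_gcd_z; rewrite dvdp_map dvdp_gcdr.
have [z0 z0_prim] := C_prim_root_exists d_gt0.
rewrite toC (Cintr_Cyclotomic z0_prim) (root_cyclotomic z0_prim) in root_Phi.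
have [p [Ep _] minp_dvd] := minCpolyP z.
have -> : pQ 'Phi_d = p.
  apply: (@map_inj_poly _ _ (ratr : rat -> algC)); [exact: fmorph_inj | exact: rmorph0 |].
  by rewrite -Ep toC (Cintr_Cyclotomic root_Phi) (minCpoly_cyclotomic root_Phi).
by rewrite -minp_dvd.
Qed.

Section CyclotomicFactors.
Variables (n : nat) (n_gt0 : (0 < n)%N).

Definition cofactor (d : nat) : {poly int} := ('X^n - 1) %/ 'Phi_d.

Lemma cofactorE d : d \in divisors n ->
  cofactor d = \prod_(e <- rem d (divisors n)) 'Phi_e.
Proof.
move=> dn; rewrite /cofactor -prod_Cyclotomic // (big_rem d dn) /= mulrC.
by rewrite Pdiv.IdomainMonic.mulpK // Cyclotomic_monic.
Qed.

Lemma Phi_cofactor d : d \in divisors n -> 'Phi_d * cofactor d = 'X^n - 1.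
Proof. by move=> dn; rewrite cofactorE // -prod_Cyclotomic // (big_rem d dn). Qed.

Lemma separable_Xn_sub1 : separable_poly (pQ ('X^n - 1)).
Proof.
rewrite rmorphB rmorph1 /= map_polyXn separable_Xn_sub_1 //.
by rewrite pnatr_eq0 -lt0n.
Qed.

Lemma coprimep_Phi_cofactor d : d \in divisors n ->
  coprimep (pQ 'Phi_d) (pQ (cofactor d)).
Proof.
move=> dn; have := separable_Xn_sub1.
by rewrite -(Phi_cofactor dn) rmorphM separable_mul => /and3P[].
Qed.

Lemma Phi_dvd_cofactor e d : e \in divisors n -> d \in divisors n -> e != d ->
  pQ 'Phi_e %| pQ (cofactor d).
Proof.
move=> en dn ne_ed; rewrite cofactorE // rmorph_prod (big_rem e) /= ?dvdp_mulr //.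
by rewrite mem_rem_uniq ?divisors_uniq // inE ne_ed.
Qed.

Lemma Phi_dvd_Xn_sub1 e : e \in divisors n -> pQ 'Phi_e %| pQ ('X^n - 1).
Proof. by move=> en; rewrite -(Phi_cofactor en) rmorphM dvdp_mulr. Qed.

(* The [Phi_e] are pairwise coprime since [X^n - 1] is separable. *)
Lemma Xn_sub1_dvd (y : {poly rat}) :
  (forall e, e \in divisors n -> pQ 'Phi_e %| y) -> pQ ('X^n - 1) %| y.
Proof.
have := separable_Xn_sub1; rewrite -prod_Cyclotomic // rmorph_prod.
elim: (divisors n) => [|e r IHr] sep_r Phi_dvd_y; first by rewrite big_nil dvd1p.
move: sep_r; rewrite !big_cons separable_mul => /and3P[_ sep_r cop].
rewrite Gauss_dvdp // Phi_dvd_y ?mem_head // IHr // => e' e'r.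
by rewrite Phi_dvd_y // in_cons e'r orbT.
Qed.

Lemma cofactor_interpolate d (p : {poly rat}) : d \in divisors n ->
  exists r : {poly rat}, (size r <= totient d)%N && (pQ 'Phi_d %| p - pQ (cofactor d) * r).
Proof.
move=> dn; have := coprimep_Phi_cofactor dn.
case/Bezout_eq1_coprimepP => -[u v] /= Buv.
exists ((v * p) %% pQ 'Phi_d); apply/andP; split.
  rewrite -ltnS -(size_Cyclotomic d) -size_pQ ltn_modpN0 //.
  by rewrite -size_poly_eq0 size_pQ size_poly_eq0 monic_neq0 // Cyclotomic_monic.
set P := pQ 'Phi_d in Buv *; set c := pQ (cofactor d) in Buv *.
have -> : p - c * ((v * p) %% P) = (u * p + c * (v * p %/ P)) * P.
  have -> : (v * p) %% P = v * p - v * p %/ P * P.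
    by rewrite {2}(divp_eq (v * p) P) addrC addKr.
  by rewrite -[X in X - _ = _]mul1r -Buv; ring.
exact: dvdp_mull.
Qed.

(* Chinese remainder theorem for [Q[X]/(X^n - 1) = prod_(e %| n) Q[X]/(Phi_e)]:
   [cofactor d] vanishes modulo every [Phi_e] except [Phi_d]. *)
Lemma Xn_sub1_interpolate (D : seq nat) (p : {poly rat}) :
    uniq D -> {subset D <= divisors n} ->
    (forall e, e \in divisors n -> e \notin D -> pQ 'Phi_e %| p) ->
  exists2 r : nat -> {poly rat}, (forall d, d \in D -> size (r d) <= totient d)%N
    & pQ ('X^n - 1) %| p - \sum_(d <- D) pQ (cofactor d) * r d.
Proof.
move=> uD sDn Phi_dvd_p.
pose good d (r : {poly rat}) := (d \in divisors n) ==>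
  (size r <= totient d)%N && (pQ 'Phi_d %| p - pQ (cofactor d) * r).
have good_ex d : exists r, good d r.
  have [/(cofactor_interpolate p) [r] | dNn] := boolP (d \in divisors n).
    by exists r; apply/implyP.
  by exists 0; rewrite /good (negbTE dNn).
pose r d := xchoose (good_ex d).
have good_r d : d \in divisors n -> (size (r d) <= totient d)%N &&
    (pQ 'Phi_d %| p - pQ (cofactor d) * r d).
  exact/implyP/(xchooseP (good_ex d)).
exists r => [d /sDn /good_r /andP[] // | ].
apply: Xn_sub1_dvd => e en.
have Phi_dvd_other d : d \in D -> d != e -> pQ 'Phi_e %| pQ (cofactor d) * r d.
  by move=> dD ne_de; rewrite dvdp_mulr // Phi_dvd_cofactor // ?sDn // eq_sym.
have [eD | eND] := boolP (e \in D); last first.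
  rewrite dvdp_sub ?Phi_dvd_p // big_seq dvdp_sum // => d dD.
  by rewrite Phi_dvd_other //; apply: contraNneq eND => <-.
rewrite (big_rem e eD) /= opprD addrA dvdp_sub //; first by case/andP: (good_r e en).
rewrite big_seq dvdp_sum // => d d_rem; rewrite Phi_dvd_other ?(mem_rem d_rem) //.
by apply: contraTneq d_rem => ->; rewrite mem_rem_uniqF.
Qed.

End CyclotomicFactors.

Section GroupRing.
Variables (gT : finGroupType) (s : gT).
Local Notation n := #[s]%g.
Local Notation ZG := (ZG s).
Local Notation peval := (peval s).
Local Notation gmul := (gmul s).

Lemma peval_widen (p : {poly int}) m : (size p <= m)%N ->
  forall g, peval p g = \sum_(i < m) p`_i * ((s ^+ i)%g == g)%:Z.
Proof.
move=> le_p_m g.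
rewrite ffunE (big_ord_widen m (fun i => p`_i * ((s ^+ i)%g == g)%:Z) le_p_m).
rewrite big_mkcond /=; apply: eq_bigr => i _; case: ltnP => // le_p_i.
by rewrite nth_default // mul0r.
Qed.

Lemma peval_is_zmod_morphism : zmod_morphism peval.
Proof.
move=> p q; apply/ffunP => g; set m := maxn (size p) (size q).
have le_pq_m : (size (p - q)%R <= m)%N.
  by rewrite (leq_trans (size_polyD _ _)) // size_polyN.
have -> : (peval p - peval q) g = peval p g - peval q g by rewrite !ffunE.
rewrite (peval_widen le_pq_m).
rewrite !(@peval_widen _ m) ?leq_maxl ?leq_maxr // -sumrB.
by apply: eq_bigr => i _; rewrite coefB mulrBl.
Qed.

HB.instance Definition _ :=
  GRing.isZmodMorphism.Build {poly int} {ffun gT -> int} peval peval_is_zmod_morphism.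

Lemma peval_scale c p : peval (c *: p) = peval p *~ c.
Proof. by rewrite -[c in LHS]intz scaler_int raddfMz. Qed.

Lemma peval_mem p : peval p \in ZG.
Proof.
apply/forallP => g; apply/implyP => gNs; rewrite ffunE big1 // => i _.
by case: eqP => [Eg | _]; [rewrite -Eg mem_cycle in gNs | rewrite mulr0].
Qed.

Lemma ZG_out x g : x \in ZG -> g \notin <[s]>%g -> x g = 0.
Proof. by move=> /forallP /(_ g) /implyP xg /xg /eqP. Qed.

Lemma peval_coef (p : {poly int}) k : (size p <= n)%N -> (k < n)%N -> peval p (s ^+ k)%g = p`_k.
Proof.
move=> le_p_n lt_k_n; rewrite (peval_widen le_p_n) (bigD1 (Ordinal lt_k_n)) //=.
rewrite eqxx mulr1 big1 ?addr0 // => i /eqP ne_ik.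
rewrite eq_expg_mod_order !modn_small //.
by case: eqP => [Eik | _]; [case: ne_ik; apply: val_inj | rewrite mulr0].
Qed.

Lemma pevalXn j g : peval 'X^j g = ((s ^+ j)%g == g)%:Z.
Proof.
rewrite (peval_widen (leqnn _)) size_polyXn big_ord_recr /= big1 ?add0r.
  by rewrite coefXn eqxx mul1r.
by move=> i _; rewrite coefXn eqn_leq [(j <= i)%N]leqNgt ltn_ord andbF mul0r.
Qed.

Lemma peval_Xn_sub1 : peval ('X^n - 1) = 0.
Proof.
apply/eqP; rewrite raddfB subr_eq0 -(expr0 'X); apply/eqP/ffunP => g.
by rewrite !pevalXn expg_order expg0.
Qed.

Definition ZGpoly (x : {ffun gT -> int}) : {poly int} := \poly_(i < n) x (s ^+ i)%g.

Lemma ZGpolyK x : x \in ZG -> peval (ZGpoly x) = x.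
Proof.
move=> xZG; apply/ffunP => g; have [gs | gNs] := boolP (g \in <[s]>%g).
  have [k lt_k_n ->] := cyclePmin gs.
  by rewrite peval_coef ?size_poly // coef_poly lt_k_n.
by rewrite !ZG_out ?peval_mem.
Qed.

Lemma peval_mulXn p j : peval (p * 'X^j) = [ffun g => peval p ((s ^+ j)^-1 * g)%g].
Proof.
apply/ffunP => g; rewrite [RHS]ffunE.
have le_pXj : (size (p * 'X^j)%R <= size p + j)%N.
  by rewrite (leq_trans (size_polyMleq _ _)) // size_polyXn addnS.
rewrite (peval_widen le_pXj) (peval_widen (leqnn (size p))).
rewrite addnC big_split_ord /= big1 ?add0r => [|i _]; last first.
  by rewrite coefMXn ltn_ord mul0r.
apply: eq_bigr => i _; rewrite coefMXn ltnNge leq_addr addKn expgD.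
by congr (_ * (_ : bool)%:Z); apply/eqP/eqP => [<- | ->]; rewrite ?mulKg ?mulKVg.
Qed.

Lemma gmul_is_zmod_morphism x : zmod_morphism (gmul x).
Proof.
move=> y z; apply/ffunP => g; rewrite !ffunE -sumrB.
by apply: eq_bigr => h _; rewrite !ffunE mulrBr.
Qed.

HB.instance Definition _ x := GRing.isZmodMorphism.Build
  {ffun gT -> int} {ffun gT -> int} (gmul x) (gmul_is_zmod_morphism x).

Lemma gmul_pevalXn x j : x \in ZG ->
  gmul x (peval 'X^j) = [ffun g => x ((s ^+ j)^-1 * g)%g].
Proof.
move=> xZG; apply/ffunP => g; rewrite !ffunE.
have shift_mem : ((s ^+ j)^-1 * g \in <[s]>)%g = (g \in <[s]>%g).
  by rewrite groupMl ?groupV ?mem_cycle.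
have [gs | gNs] := boolP (g \in <[s]>%g); last first.
  rewrite ZG_out ?shift_mem // big1 // => h hs; rewrite pevalXn.
  case: eqP => [Eh | _]; last by rewrite mulr0.
  by case/negP: gNs; rewrite -(mulKVg h g) -Eh groupM ?mem_cycle.
have sjg_s : (g * (s ^+ j)^-1 \in <[s]>)%g by rewrite groupM ?groupV ?mem_cycle.
have sj_comm : commute (s ^+ j)^-1 g.
  by have [k _ ->] := cyclePmin gs; apply/commute_sym/commuteV/commuteX2.
rewrite sj_comm (bigD1 _ sjg_s) /= big1 ?addr0 => [|h /andP[_ ne_h]].
  by rewrite pevalXn invMg invgK -mulgA mulVg mulg1 eqxx mulr1.
rewrite pevalXn; case: eqP => [Eh | _]; last by rewrite mulr0.
by case/eqP: ne_h; rewrite Eh invMg invgK mulKVg.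
Qed.

Lemma peval_mul p q : peval (p * q) = gmul (peval p) (peval q).
Proof.
rewrite -[q]coefK poly_def mulr_sumr !raddf_sum; apply: eq_bigr => j _ /=.
by rewrite -scalerAr !peval_scale raddfMz /= gmul_pevalXn ?peval_mem // peval_mulXn.
Qed.

Lemma peval_eq0_small (p : {poly int}) : (size p <= n)%N -> peval p = 0 -> p = 0.
Proof.
move=> le_p_n p0; apply/polyP => k; rewrite coef0.
have [lt_k_n | le_n_k] := ltnP k n; last by rewrite nth_default // (leq_trans le_p_n).
by rewrite -(peval_coef le_p_n lt_k_n) p0 ffunE.
Qed.

Lemma peval_eq0 (p : {poly int}) : (peval p == 0) = (pQ ('X^n - 1) %| pQ p).
Proof.
have m_monic : ('X^n - 1 : {poly int}) \is monic by rewrite -polyC1 monicXnsubC.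
have Ep := Pdiv.IdomainMonic.divp_eq m_monic p.
set m := 'X^n - 1 in m_monic Ep *; set r := p %% m in Ep.
have size_m : size m = n.+1 by rewrite /m -polyC1 size_XnsubC.
have le_r_n : (size r <= n)%N.
  by rewrite -ltnS -size_m ltn_modpN0 // monic_neq0.
have -> : peval p = peval r.
  by rewrite {1}Ep raddfD /= peval_mul peval_Xn_sub1 raddf0 add0r.
have -> : pQ m %| pQ p = (pQ m %| pQ r).
  have -> : pQ p = pQ (p %/ m) * pQ m + pQ r by rewrite -rmorphM -rmorphD -Ep.
  by rewrite dvdp_addr // dvdp_mull.
apply/eqP/idP => [/(peval_eq0_small le_r_n) -> | m_dvd_r]; first by rewrite rmorph0 dvdp0.
suff -> : r = 0 by rewrite raddf0.
apply/eqP; apply: contraTT m_dvd_r => r_neq0.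
have pQr_neq0 : pQ r != 0 by rewrite -size_poly_eq0 size_pQ size_poly_eq0.
by apply/negP => /(dvdp_leq pQr_neq0); rewrite !size_pQ size_m leqNgt ltnS le_r_n.
Qed.

Lemma peval_eq (p q : {poly int}) : (peval p == peval q) = (pQ ('X^n - 1) %| pQ (p - q)).
Proof. by rewrite -subr_eq0 -raddfB peval_eq0. Qed.

End GroupRing.

Section CyclotomicComponents.
Variables (gT : finGroupType) (s : gT).
Local Notation n := #[s]%g.
Local Notation ZG := (ZG s).
Local Notation peval := (peval s).
Local Notation ZGpoly := (ZGpoly s).

Definition Phi_dvd_off (D : seq nat) (p : {poly int}) : Prop :=
  forall e, e \in divisors n -> e \notin D -> pQ 'Phi_e %| pQ p.

(* The kernel of [Z[Gamma] -> prod_(e \notin D) Q[X]/(Phi_e)], i.e. the [x]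
   vanishing at all primitive [e]-th roots of unity, [e] not in [D]. *)
Definition kerPhi (D : seq nat) (x : {ffun gT -> int}) : Prop :=
  x \in ZG /\ Phi_dvd_off D (ZGpoly x).

Lemma Phi_dvd_ZGpoly_peval e p : e \in divisors n ->
  (pQ 'Phi_e %| pQ (ZGpoly (peval p))) = (pQ 'Phi_e %| pQ p).
Proof.
move=> en; have /eqP := ZGpolyK (peval_mem s p); rewrite peval_eq.
move=> /(dvdp_trans (Phi_dvd_Xn_sub1 (order_gt0 s) en)); rewrite rmorphB /= => Phi_dvd_diff.
by rewrite -[X in _ %| X](subrK (pQ p)) dvdp_addr.
Qed.

Lemma kerPhi_peval D p : kerPhi D (peval p) <-> Phi_dvd_off D p.
Proof.
split=> [[_ Phi_dvd_p] e en eD | Phi_dvd_p]; first by rewrite -Phi_dvd_ZGpoly_peval ?Phi_dvd_p.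
by split=> [|e en eD]; rewrite ?peval_mem ?Phi_dvd_ZGpoly_peval ?Phi_dvd_p.
Qed.

Lemma kerPhi_submodule D : is_submodule s (kerPhi D).
Proof.
split=> [x [] // | | x y [xZG Hx] [yZG Hy] | x [xZG Hx] | r x rZG [xZG Hx]].
- by rewrite -(raddf0 peval) kerPhi_peval => e _ _; rewrite rmorph0 dvdp0.
- rewrite -(ZGpolyK xZG) -(ZGpolyK yZG) -raddfD kerPhi_peval => e en eD.
  by rewrite rmorphD dvdp_add ?Hx ?Hy.
- rewrite -(ZGpolyK xZG) -raddfN kerPhi_peval => e en eD.
  by rewrite rmorphN dvdpNr Hx.
- rewrite -(ZGpolyK rZG) -(ZGpolyK xZG) -peval_mul kerPhi_peval => e en eD.
  by rewrite rmorphM dvdp_mull ?Hx.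
Qed.

Lemma kerPhi_torsion_free D : torsion_free_quot s (kerPhi D).
Proof.
move=> a x a0 xZG; rewrite -(ZGpolyK xZG) -peval_scale !kerPhi_peval.
move=> Phi_dvd_xa e en eD; have := Phi_dvd_xa e en eD.
by rewrite map_polyZ dvdpZr ?intr_eq0.
Qed.

Lemma MD_peval_sum D (t : nat -> {poly int}) :
    (forall d, d \in D -> size (t d) <= totient d)%N ->
  MD s D (peval (\sum_(d <- D) Pfd s d * t d)).
Proof.
move=> le_t; exists (fun d l => (t d)`_l); rewrite raddf_sum.
apply: eq_big_seq => d dD; rewrite {1}(polyE_size_le (le_t d dD)) mulr_sumr.
by rewrite raddf_sum; apply: eq_bigr => l _ /=; rewrite -scalerAr peval_scale.
Qed.

Lemma MD_kerPhi D x : {subset D <= divisors n} -> MD s D x -> kerPhi D x.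
Proof.
move=> sDn [c ->].
rewrite (eq_bigr (fun d => peval (\sum_(l < totient d) c d l *: (Pfd s d * 'X^l)))).
  rewrite -raddf_sum kerPhi_peval => e en eD.
  rewrite rmorph_sum big_seq dvdp_sum // => d dD; rewrite rmorph_sum dvdp_sum // => l _.
  rewrite -mul_polyC !rmorphM /= dvdp_mull // dvdp_mulr //.
  by apply: (Phi_dvd_cofactor (order_gt0 s) en (sDn d dD)); apply: contraNneq eD => ->.
by move=> d _; rewrite raddf_sum; apply: eq_bigr => l _ /=; rewrite peval_scale.
Qed.

Lemma MbarD_kerPhi D x : uniq D -> {subset D <= divisors n} ->
  MbarD s D x <-> kerPhi D x.
Proof.
move=> uD sDn; split=> [[xZG [a [a0 /(MD_kerPhi sDn)]]] | [xZG Phi_dvd_x]].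
  exact: kerPhi_torsion_free.
have [r le_r dvd_r] := Xn_sub1_interpolate (order_gt0 s) uD sDn Phi_dvd_x.
have [a a0 [t Et]] := rat_polys_scale r D.
split=> //; exists a; split=> //.
suff -> : x *~ a = peval (\sum_(d <- D) Pfd s d * t d).
  apply: MD_peval_sum => d dD.
  by rewrite -size_pQ Et // (leq_trans (size_scale_leq _ _)) ?le_r.
rewrite -(ZGpolyK xZG) -peval_scale; apply/eqP; rewrite peval_eq.
suff -> : pQ (a *: ZGpoly x - \sum_(d <- D) Pfd s d * t d) =
    a%:~R *: (pQ (ZGpoly x) - \sum_(d <- D) pQ (cofactor n d) * r d).
  by rewrite dvdpZr ?intr_eq0.
rewrite rmorphB /= map_polyZ rmorph_sum scalerBr scaler_sumr; congr (_ - _).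
by apply: eq_big_seq => d dD /=; rewrite rmorphM /= Et // scalerAr.
Qed.

End CyclotomicComponents.

Section SaturatedSubmodules.
Variables (gT : finGroupType) (s : gT) (M : {ffun gT -> int} -> Prop).
Local Notation n := #[s]%g.
Local Notation peval := (peval s).

Lemma is_submodule_ext (N : {ffun gT -> int} -> Prop) :
  (forall x, M x <-> N x) -> is_submodule s M -> is_submodule s N.
Proof.
move=> MN [M_ZG M0 Madd Mopp Mmul].
have NM x : N x -> M x by case: (MN x).
split=> [x /NM/M_ZG // | | x y /NM Mx /NM My | x /NM Mx | r x rZG /NM Mx]; apply/MN; auto.
Qed.

Lemma torsion_free_quot_ext (N : {ffun gT -> int} -> Prop) :
  (forall x, M x <-> N x) -> torsion_free_quot s M -> torsion_free_quot s N.
Proof.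
move=> MN M_tf a x a0 xZG Nxa; apply/MN; apply: M_tf a0 xZG _.
by case: (MN (x *~ a)) => _; apply.
Qed.

Hypothesis M_submod : is_submodule s M.

Lemma submodule_mulz x c : M x -> M (x *~ c).
Proof.
case: M_submod => _ M0 Madd Mopp _ Mx.
have Mxn k : M (x *+ k) by elim: k => [|k IHk]; rewrite ?mulr0n ?mulrS; auto.
by case: c => k; rewrite ?NegzE ?mulrNz -pmulrn; auto.
Qed.

Lemma submodule_MD D :
  (forall d, d \in D -> M (peval (Pfd s d))) -> forall x, MD s D x -> M x.
Proof.
case: M_submod => _ M0 Madd _ Mmul M_Pfd x [c ->].
have Msum I r (P : pred I) (F : I -> {ffun gT -> int}) :
    (forall i, P i -> M (F i)) -> M (\sum_(i <- r | P i) F i).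
  by move=> MF; apply: (big_ind M).
rewrite big_seq; apply: (Msum) => d dD; apply: Msum => l _; apply: submodule_mulz.
by rewrite mulrC peval_mul; apply: Mmul; [exact: peval_mem | exact: M_Pfd].
Qed.

Hypothesis M_tf : torsion_free_quot s M.

(* Over [Q], [z] is invertible modulo the irreducible [Phi_d], say [v z = 1];
   as [P_{f,d} Phi_d = X^n - 1], [(P_{f,d} a v)(sigma) z = a P_{f,d}(sigma)]
   for [a] clearing the denominators of [v]. *)
Lemma Pfd_mem d z : d \in divisors n -> M z -> ~~ (pQ 'Phi_d %| pQ (ZGpoly s z)) ->
  M (peval (Pfd s d)).
Proof.
move=> dn Mz Phi_ndvd_z; case: M_submod => M_ZG _ _ _ Mmul.
have d_gt0 : (0 < d)%N.
  by move: dn; rewrite -pos_dvdn_divisors ?order_gt0 // => /andP[].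
have /Bezout_eq1_coprimepP [[u v] /= Buv] := coprimep_Phi d_gt0 Phi_ndvd_z.
have [t [a a0 Ev]] := rat_poly_scale v.
have Et : pQ t = a%:~R *: v by rewrite Ev scalerA mulfV ?intr_eq0 // scale1r.
apply: (M_tf a0 (peval_mem s _)).
suff -> : peval (Pfd s d) *~ a = gmul s (peval (Pfd s d * t)) z.
  by apply: Mmul; [exact: peval_mem | exact: Mz].
rewrite -(ZGpolyK (M_ZG _ Mz)) -peval_mul -peval_scale; apply/eqP; rewrite peval_eq.
rewrite -(Phi_cofactor (order_gt0 s) dn) rmorphB /= map_polyZ !rmorphM /= Et.
set c := pQ (cofactor n d); set P := pQ 'Phi_d; set w := pQ (ZGpoly s z).
have -> : a%:~R *: c - c * (a%:~R *: v) * w = (a%:~R *: u) * (P * c).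
  by rewrite -[a%:~R *: c]mulr1 -Buv -!mul_polyC; ring.
exact: dvdp_mull.
Qed.

Definition component_divisors : seq nat :=
  [seq d <- divisors n | classic_bool (M (peval (Pfd s d)))].

Lemma component_divisors_uniq : uniq component_divisors.
Proof. by rewrite filter_uniq ?divisors_uniq. Qed.

Lemma component_divisors_sub : {subset component_divisors <= divisors n}.
Proof. by move=> d; rewrite mem_filter => /andP[]. Qed.

Lemma submodule_kerPhi x : M x <-> kerPhi s component_divisors x.
Proof.
have [uD sDn] := (component_divisors_uniq, component_divisors_sub).
split=> [Mx | /(MbarD_kerPhi _ uD sDn) [xZG [a [a0 MDxa]]]].
  split=> [|e en eD]; first by case: M_submod => M_ZG *; apply: M_ZG.
  apply: contraNT eD => Phi_ndvd_x; rewrite mem_filter en andbT.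
  exact/classic_boolP/(Pfd_mem en Mx).
apply: M_tf a0 xZG _; apply: submodule_MD MDxa => d.
by rewrite mem_filter => /andP[/classic_boolP].
Qed.

End SaturatedSubmodules.

Theorem corollaryA2 (gT : finGroupType) (sigma : gT)
    (M : {ffun gT -> int} -> Prop) :
  (is_submodule sigma M /\ torsion_free_quot sigma M) <->
  exists D : seq nat,
    [/\ uniq D, all (fun d => (0 < d)%N && (d %| #[sigma]%g)%N) D &
        forall x, M x <-> MbarD sigma D x].
Proof.
have n_gt0 := order_gt0 sigma.
split=> [[M_submod M_tf] | [D [uD D_div M_MbarD]]].
  exists (component_divisors sigma M); split.
  - exact: component_divisors_uniq.
  - by apply/allP => d /component_divisors_sub; rewrite pos_dvdn_divisors.
  - move=> x; apply: iff_trans (submodule_kerPhi M_submod M_tf x) _.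
    apply: iff_sym; apply: MbarD_kerPhi;
      [exact: component_divisors_uniq | exact: component_divisors_sub].
have sDn : {subset D <= divisors #[sigma]%g}.
  by move=> d /(allP D_div); rewrite pos_dvdn_divisors.
have kerPhi_M x : kerPhi sigma D x <-> M x.
  exact: iff_trans (iff_sym (MbarD_kerPhi x uD sDn)) (iff_sym (M_MbarD x)).
split; first exact: is_submodule_ext kerPhi_M (kerPhi_submodule _ _).
exact: (@torsion_free_quot_ext _ _ _ _ kerPhi_M (@kerPhi_torsion_free _ sigma D)).
Qed.
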